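(* Suppose $\sigma:\overline{\mathbb F}\to\overline{\mathbb F}$ satisfies Condition 1 with constants $c_1,c_2,\eta\in\mathbb F$, and let $z\in\mathbb F$ with $|z|\le 1^+$. Then there exists a depth-1 $\sigma$-network $\mu_z:\overline{\mathbb F}\to\overline{\mathbb F}$ (i.e., a map $x\mapsto(x\otimes w)\oplus b$ with $w,b\in\mathbb F$) such that one of the following holds: (a) $\gamma(\mu_z^\sharp(\langle-1,z\rangle))\subset[-\Omega,\eta]$ and $\gamma(\mu_z^\sharp(\langle z^+,1\rangle))\subset[\eta^+,\Omega]$; (b) $\gamma(\mu_z^\sharp(\langle-1,z\rangle))\subset[\eta^+,\Omega]$ and $\gamma(\mu_z^\sharp(\langle z^+,1\rangle))\subset[-\Omega,\eta]$.
   Context: Floating point. Fix integers $E\ge 5$ and $M$ with $2^{E-1}\ge M\ge 3$; $\mathfrak e_{\min}=-2^{E-1}+2$, $\mathfrak e_{\max}=2^{E-1}-1$. $\mathbb F=\{(-1)^b(s_0.s_1\dots s_M)_2\cdot 2^e: b,s_i\in\{0,1\},e\in\{\mathfrak e_{\min},\dots,\mathfrak e_{\max}\}\}$, $\overline{\mathbb F}=\mathbb F\cup\{-\infty,+\infty,\mathrm{NaN}\}$, $\Omega=2^{\mathfrak e_{\max}}(2-2^{-M})$, $\varepsilon=2^{-M-1}$. $x^+$ is the next larger element of $\overline{\mathbb F}\setminus\{\mathrm{NaN}\}$ (so $1^+=1+2^{-M}$). $\mathrm{rnd}$ is round-to-nearest-ties-to-even with overflow to $\pm\infty$ at $|x|\ge\Omega+2^{\mathfrak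 e_{\max}}\varepsilon$; $x\oplus y=\mathrm{rnd}(x+y)$, $x\otimes y=\mathrm{rnd}(xy)$ for finite operands (IEEE-754 otherwise). Intervals: $\mathbb I=\{\langle a,b\rangle:a,b\in\overline{\mathbb F}\setminus\{\mathrm{NaN}\},a\le b\}\cup\{\top\}$, $\gamma(\langle a,b\rangle)=[a,b]\cap\overline{\mathbb F}$, $\gamma(\top)=\overline{\mathbb F}$. $\langle a,b\rangle\odot^\sharp\langle c,d\rangle$ ($\odot\in\{\oplus,\otimes\}$) is $\langle\min S,\max S\rangle$ for $S=\{a\odot c,a\odot d,b\odot c,b\odot d\}$, or $\top$ if $\mathrm{NaN}\in S$ or an operand is $\top$. For $\mu_z(x)=(x\otimes w)\oplus b$, $\mu_z^\sharp(\mathcal I)=(\mathcal I\otimes^\sharp\langle w,w\rangle)\oplus^\sharp\langle b,b\rangle$. Condition 1 with constants $c_1,c_2,\eta$: (C1) $\sigma(c_1)=0$, $|\sigma(c_2)|\in[\frac\varepsilon2+2\varepsilon^2,\frac54-2\varepsilon]$, $\max\{|c_1|,|c_2|\}\ge2^{\mathfrak e_{\min}+1}$, and $\sigma(x)$ between $\sigma(c_1),\sigma(c_2)$ for all $x$ between $c_1,c_2$; (C2) $|\eta|\in[2^{\mathfrak e_{\min}+5},4-8\varepsilon]$, $|\sigma(\eta)|,|\sigma(\eta^+)|\in[2^{\mathfrak e_{\min}+5},2^{\mathfrak e_{\max}-6}|\eta|]$, and for all $x,y\in\mathbb F$ with $x\le\eta<\eta^+\le y$, either $\sigma(x)\le\sigma(\eta)<\sigma(\eta^+)\le\sigma(y)$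 or $\sigma(x)\ge\sigma(\eta)>\sigma(\eta^+)\ge\sigma(y)$; (C3) there is $\lambda\in[0,2^{\mathfrak e_{\max}-7}\min\{|\sigma(\eta)|,2^{M+3}\}]$ with $|\sigma(x)-\sigma(\eta)|\le\lambda|x-\eta|$ and $|\sigma(y)-\sigma(\eta^+)|\le\lambda|y-\eta^+|$ for all $x,y\in\mathbb F$ with $x\le\eta<\eta^+\le y$. *)

From Stdlib Require Import Reals ZArith ClassicalEpsilon Lra Bool.
Open Scope R_scope.

Definition emin (E : nat) : Z := (- 2 ^ (Z.of_nat E - 1) + 2)%Z.
Definition emax (E : nat) : Z := (2 ^ (Z.of_nat E - 1) - 1)%Z.

(** x ∈ 𝔽 : x = (-1)^b (s0.s1...sM)_2 2^e, i.e. x = m 2^(e-M) with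
    m a signed integer with |m| < 2^(M+1) and emin <= e <= emax. *)
Definition is_float (E M : nat) (x : R) : Prop :=
  exists (m e : Z), (Z.abs m < 2 ^ (Z.of_nat M + 1))%Z /\
    (emin E <= e <= emax E)%Z /\
    x = IZR m * powerRZ 2 (e - Z.of_nat M).

Definition Omega (E M : nat) : R :=
  powerRZ 2 (emax E) * (2 - powerRZ 2 (- Z.of_nat M)).
Definition eps (M : nat) : R := powerRZ 2 (- Z.of_nat M - 1).

(** Extended floats 𝔽 ∪ {-∞, +∞, NaN} (elements of a larger carrier; membership below). *)
Inductive xfloat := Fin (r : R) | PInf | NInf | NaN.

Definition in_Fbar (E M : nat) (x : xfloat) : Prop :=
  match x with Fin r => is_float E M r | _ => True end.

Definition xleb (x y : xfloat) : bool :=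
  match x, y with
  | NaN, _ | _, NaN => false
  | NInf, _ => true
  | _, PInf => true
  | Fin a, Fin b => if Rle_dec a b then true else false
  | _, _ => false
  end.
Definition xle (x y : xfloat) : Prop := xleb x y = true.
Definition xlt (x y : xfloat) : Prop := xle x y /\ x <> y.

Definition is_next (E M : nat) (x y : xfloat) : Prop :=
  y <> NaN /\ in_Fbar E M y /\ xlt x y /\
  forall u, u <> NaN -> in_Fbar E M u -> xlt x u -> xle y u.
Definition fsucc (E M : nat) (x : xfloat) : xfloat :=
  epsilon (inhabits NaN) (is_next E M x).

(** f has its canonical representation (normalized, or subnormal with e = emin)
    with an even last significand bit. *)
Definition is_even_float (E M : nat) (f : R) : Prop :=
  exists (m e : Z), (Z.abs m < 2 ^ (Z.of_nat M + 1))%Z /\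
    (emin E <= e <= emax E)%Z /\
    f = IZR m * powerRZ 2 (e - Z.of_nat M) /\
    ((2 ^ Z.of_nat M <= Z.abs m)%Z \/ e = emin E) /\
    Z.even m = true.

Definition is_nearest (E M : nat) (x f : R) : Prop :=
  is_float E M f /\ forall g, is_float E M g -> Rabs (x - f) <= Rabs (x - g).

Definition is_rnd_fin (E M : nat) (x f : R) : Prop :=
  is_nearest E M x f /\
  ((forall g, is_nearest E M x g -> g = f) \/ is_even_float E M f).

Definition rnd (E M : nat) (x : R) : xfloat :=
  let th := Omega E M + powerRZ 2 (emax E) * eps M in
  if Rle_dec th x then PInf
  else if Rle_dec x (- th) then NInf
  else Fin (epsilon (inhabits 0) (is_rnd_fin E M x)).

Definition xadd (E M : nat) (x y : xfloat) : xfloat :=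
  match x, y with
  | NaN, _ | _, NaN => NaN
  | PInf, NInf | NInf, PInf => NaN
  | PInf, _ | _, PInf => PInf
  | NInf, _ | _, NInf => NInf
  | Fin a, Fin b => rnd E M (a + b)
  end.

Definition inf_times (pos : bool) (a : R) : xfloat :=
  if Rlt_dec 0 a then (if pos then PInf else NInf)
  else if Rlt_dec a 0 then (if pos then NInf else PInf)
  else NaN.

Definition xmul (E M : nat) (x y : xfloat) : xfloat :=
  match x, y with
  | NaN, _ | _, NaN => NaN
  | Fin a, Fin b => rnd E M (a * b)
  | PInf, Fin a | Fin a, PInf => inf_times true a
  | NInf, Fin a | Fin a, NInf => inf_times false a
  | PInf, PInf | NInf, NInf => PInf
  | PInf, NInf | NInf, PInf => NInf
  end.

Inductive itv := Itv (a b : xfloat) | Top.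

Definition itv_wf (I : itv) : Prop :=
  match I with Itv a b => xle a b | Top => True end.

Definition gamma (E M : nat) (I : itv) (x : xfloat) : Prop :=
  in_Fbar E M x /\ match I with Itv a b => xle a x /\ xle x b | Top => True end.

Definition is_nan (x : xfloat) : bool := match x with NaN => true | _ => false end.
Definition xmin (x y : xfloat) : xfloat := if xleb x y then x else y.
Definition xmax (x y : xfloat) : xfloat := if xleb x y then y else x.

Definition itv_lift (op : xfloat -> xfloat -> xfloat) (I J : itv) : itv :=
  match I, J with
  | Itv a b, Itv c d =>
      let s1 := op a c in let s2 := op a d in
      let s3 := op b c in let s4 := op b d in
      if orb (orb (is_nan s1) (is_nan s2)) (orb (is_nan s3) (is_nan s4)) then Top
      else Itv (xmin (xmin s1 s2) (xmin s3 s4)) (xmax (xmax s1 s2) (xmax s3 s4))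
  | _, _ => Top
  end.

Definition mu_sharp (E M : nat) (w b : R) (I : itv) : itv :=
  itv_lift (xadd E M) (itv_lift (xmul E M) I (Itv (Fin w) (Fin w))) (Itv (Fin b) (Fin b)).

Definition gamma_sub (E M : nat) (I : itv) (lo hi : xfloat) : Prop :=
  forall x, gamma E M I x -> xle lo x /\ xle x hi.

Definition between (v a b : xfloat) : Prop :=
  (xle a v /\ xle v b) \/ (xle b v /\ xle v a).

Definition abs_in (v : xfloat) (lo hi : R) : Prop :=
  exists r, v = Fin r /\ lo <= Rabs r <= hi.

Definition condition1 (E M : nat) (sigma : xfloat -> xfloat) (c1 c2 eta : R) : Prop :=
  let e := eps M in
  let etap := fsucc E M (Fin eta) in
  (sigma (Fin c1) = Fin 0 /\
   abs_in (sigma (Fin c2)) (e / 2 + 2 * e ^ 2) (5 / 4 - 2 * e) /\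
   Rmax (Rabs c1) (Rabs c2) >= powerRZ 2 (emin E + 1) /\
   (forall x, is_float E M x -> Rmin c1 c2 <= x <= Rmax c1 c2 ->
      between (sigma (Fin x)) (sigma (Fin c1)) (sigma (Fin c2)))) /\
  (powerRZ 2 (emin E + 5) <= Rabs eta <= 4 - 8 * e /\
   abs_in (sigma (Fin eta)) (powerRZ 2 (emin E + 5)) (powerRZ 2 (emax E - 6) * Rabs eta) /\
   abs_in (sigma etap) (powerRZ 2 (emin E + 5)) (powerRZ 2 (emax E - 6) * Rabs eta) /\
   (forall x y, is_float E M x -> is_float E M y ->
      x <= eta -> xlt (Fin eta) etap -> xle etap (Fin y) ->
      (xle (sigma (Fin x)) (sigma (Fin eta)) /\ xlt (sigma (Fin eta)) (sigma etap) /\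
       xle (sigma etap) (sigma (Fin y))) \/
      (xle (sigma (Fin eta)) (sigma (Fin x)) /\ xlt (sigma etap) (sigma (Fin eta)) /\
       xle (sigma (Fin y)) (sigma etap)))) /\
  (exists (lam s0 s1 e1 : R),
     sigma (Fin eta) = Fin s0 /\ sigma etap = Fin s1 /\ etap = Fin e1 /\
     0 <= lam <= powerRZ 2 (emax E - 7) * Rmin (Rabs s0) (powerRZ 2 (Z.of_nat M + 3)) /\
     forall x y, is_float E M x -> is_float E M y -> x <= eta -> eta < e1 -> e1 <= y ->
       (exists r, sigma (Fin x) = Fin r /\ Rabs (r - s0) <= lam * Rabs (x - eta)) /\
       (exists r, sigma (Fin y) = Fin r /\ Rabs (r - s1) <= lam * Rabs (y - e1))).

(* Write eta = a 2^(qe-M) and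
   z = c 2^(qz-M) on their own float grids, so that eta^+ and z^+ are the next grid points.
   Multiplying by W = 2^(qe-qz) is exact and carries the grid of z onto that of eta.  With
   b = eta - z W (when a and c have the same sign) or w = -W, b = eta^+ + z W (otherwise),
   b is again a float and the network sends z, z^+ exactly to eta, eta^+ (resp. eta^+, eta).
   Rounding to nearest never leaves an interval with float ends, so the images of the far
   endpoints -1 and 1 stay on the correct side, and the abstract semantics only evaluates the
   network at the endpoints. *)

From Stdlib Require Import Reals ZArith Lia Lra ClassicalEpsilon Classical Wf_nat.
Open Scope R_scope.

Local Notation bpow e := (powerRZ 2 e).

Lemma Rabs_le_between x a : Rabs x <= a -> - a <= x <= a.
Proof. unfold Rabs; destruct (Rcase_abs x); intros; lra. Qed.

Lemma bpow_gt_0 e : 0 < bpow e.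
Proof. apply powerRZ_lt; lra. Qed.

Lemma bpow_plus a b : bpow (a + b) = bpow a * bpow b.
Proof. apply powerRZ_add; lra. Qed.

Lemma bpow_1 : bpow 1 = 2.
Proof. simpl; ring. Qed.

Lemma IZR_Zpower k : (0 <= k)%Z -> IZR (2 ^ k) = bpow k.
Proof.
  intros Hk. rewrite <- (Z2Nat.id k Hk), <- pow_IZR, pow_powerRZ. reflexivity.
Qed.

Lemma bpow_lt a b : (a < b)%Z -> bpow a < bpow b.
Proof.
  intros Hab. replace b with (a + (b - a))%Z by lia.
  rewrite bpow_plus, <- (IZR_Zpower (b - a)) by lia.
  assert (H2 : (2 ^ 1 <= 2 ^ (b - a))%Z) by (apply Z.pow_le_mono_r; lia).
  change (2 ^ 1)%Z with 2%Z in H2. apply IZR_le in H2. pose proof (bpow_gt_0 a).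
  assert (bpow a * 2 <= bpow a * IZR (2 ^ (b - a))) by (apply Rmult_le_compat_l; lra).
  lra.
Qed.

Lemma bpow_le a b : (a <= b)%Z -> bpow a <= bpow b.
Proof.
  intros Hab. destruct (Z.eq_dec a b) as [->|Hne]; [lra|].
  apply Rlt_le, bpow_lt. lia.
Qed.

Lemma lt_bpow a b : bpow a < bpow b -> (a < b)%Z.
Proof.
  intros H. destruct (Z_lt_le_dec a b) as [|Hba]; [assumption|].
  apply bpow_le in Hba. lra.
Qed.

Lemma xle_Fin a b : xle (Fin a) (Fin b) <-> a <= b.
Proof.
  unfold xle, xleb. destruct (Rle_dec a b); split; intros; (lra || discriminate || reflexivity).
Qed.

Lemma xle_trans a b c : xle a b -> xle b c -> xle a c.
Proof.
  unfold xle, xleb. destruct a, b, c; try discriminate; try reflexivity;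
  repeat destruct (Rle_dec _ _); try discriminate; intros; (reflexivity || lra).
Qed.

Lemma xle_antisym a b : xle a b -> xle b a -> a = b.
Proof.
  unfold xle, xleb. destruct a, b; try discriminate; try reflexivity;
  repeat destruct (Rle_dec _ _); try discriminate; intros; f_equal; lra.
Qed.

Lemma fsucc_eq E M x y : is_next E M x y -> fsucc E M x = y.
Proof.
  intros Hy. unfold fsucc.
  destruct (epsilon_spec (inhabits NaN) (is_next E M x) (ex_intro _ y Hy))
    as (Hnan' & Hin' & Hlt' & Hleast').
  destruct Hy as (Hnan & Hin & Hlt & Hleast).
  apply xle_antisym; [apply Hleast'|apply Hleast]; assumption.
Qed.

Lemma Z_bounded_max (S : Z -> Prop) n0 B :
  S n0 -> (forall n, S n -> (n <= B)%Z) ->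
  exists n, S n /\ forall m, S m -> (m <= n)%Z.
Proof.
  intros Hn0 HB.
  destruct (dec_inh_nat_subset_has_unique_least_element
              (fun k => S (B - Z.of_nat k)%Z) (fun k => classic _))
    as [k [[Hk Hleast] _]].
  { exists (Z.to_nat (B - n0)). rewrite Z2Nat.id by (specialize (HB n0 Hn0); lia).
    replace (B - (B - n0))%Z with n0 by lia. exact Hn0. }
  exists (B - Z.of_nat k)%Z. split; [exact Hk|].
  intros m Hm. specialize (HB m Hm).
  assert (Hk' : (k <= Z.to_nat (B - m))%nat).
  { apply Hleast. rewrite Z2Nat.id by lia. replace (B - (B - m))%Z with m by lia. exact Hm. }
  lia.
Qed.

Section Format.

Variables E M : nat.
Hypothesis HE : (3 <= E)%nat.
Hypothesis HM : (1 <= M)%nat.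

Local Notation Mz := (Z.of_nat M).
Local Notation K := (2 ^ Mz)%Z.
Local Notation ulp q := (bpow (q - Mz)).

Lemma Zpower_succ_M : (2 ^ (Mz + 1) = 2 * K)%Z.
Proof. rewrite Z.pow_add_r by lia. lia. Qed.

Lemma K_ge_2 : (2 <= K)%Z.
Proof.
  change 2%Z with (2 ^ 1)%Z at 1. apply Z.pow_le_mono_r; lia.
Qed.

Lemma K_even : Z.even K = true.
Proof. rewrite Z.even_pow by lia. reflexivity. Qed.

Lemma K_ulp q : IZR K * ulp q = bpow q.
Proof. rewrite IZR_Zpower, <- bpow_plus by lia. f_equal. lia. Qed.

Lemma emax_ge_3 : (3 <= emax E)%Z.
Proof.
  unfold emax. assert (4 <= 2 ^ (Z.of_nat E - 1))%Z; [|lia].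
  change 4%Z with (2 ^ 2)%Z. apply Z.pow_le_mono_r; lia.
Qed.

Lemma emin_emax : emin E = (1 - emax E)%Z.
Proof. unfold emin, emax. lia. Qed.

Lemma Omega_eq : Omega E M = IZR (2 * K - 1) * ulp (emax E).
Proof.
  assert (H : bpow (emax E) * bpow (- Mz) = ulp (emax E))
    by (rewrite <- bpow_plus; f_equal; lia).
  unfold Omega. rewrite minus_IZR, mult_IZR, Rmult_minus_distr_r, Rmult_assoc, K_ulp,
    Rmult_1_l, <- H. ring.
Qed.

Lemma float_intro q n : (emin E <= q <= emax E)%Z -> (Z.abs n < 2 * K)%Z ->
  is_float E M (IZR n * ulp q).
Proof. intros. exists n, q. rewrite Zpower_succ_M. auto. Qed.

Lemma float_opp x : is_float E M x -> is_float E M (- x).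
Proof.
  intros (m & e & Hm & He & ->). exists (- m)%Z, e.
  rewrite opp_IZR, Z.abs_opp. split; [exact Hm|split; [exact He|ring]].
Qed.

Lemma Omega_float : is_float E M (Omega E M).
Proof.
  rewrite Omega_eq. pose proof K_ge_2. pose proof emax_ge_3. pose proof emin_emax.
  apply float_intro; lia.
Qed.

Lemma float_bound x : is_float E M x -> Rabs x <= Omega E M.
Proof.
  intros (m & e & Hm & He & ->). rewrite Omega_eq, Rabs_mult, (Rabs_pos_eq (bpow _))
    by apply Rlt_le, bpow_gt_0.
  rewrite Zpower_succ_M in Hm.
  assert (Hm' : Rabs (IZR m) <= IZR (2 * K - 1)) by (rewrite <- abs_IZR; apply IZR_le; lia).
  assert (Hq : ulp e <= ulp (emax E)) by (apply bpow_le; lia).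
  pose proof (bpow_gt_0 (e - Mz)). pose proof (Rabs_pos (IZR m)). nra.
Qed.

Lemma Omega_ge : bpow (emax E) + 4 <= Omega E M.
Proof.
  pose proof emax_ge_3.
  assert (H1 : Omega E M = 2 * bpow (emax E) - ulp (emax E)).
  { rewrite Omega_eq, <- (K_ulp (emax E)), minus_IZR, mult_IZR. ring. }
  assert (H2 : ulp (emax E) <= bpow (emax E - 1)) by (apply bpow_le; lia).
  assert (H3 : bpow (emax E) = 2 * bpow (emax E - 1)).
  { replace (emax E) with (1 + (emax E - 1))%Z at 1 by lia.
    rewrite bpow_plus, bpow_1. reflexivity. }
  assert (H4 : bpow 2 <= bpow (emax E - 1)) by (apply bpow_le; lia).
  simpl in H4. lra.
Qed.

Lemma grid_double q m : IZR (2 * m) * ulp q = IZR m * ulp (q + 1).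
Proof.
  rewrite mult_IZR. replace (q + 1 - Mz)%Z with (1 + (q - Mz))%Z by lia.
  rewrite bpow_plus, bpow_1. ring.
Qed.

(* A significand equal to 2^(M+1) is absorbed by the next exponent. *)
Lemma float_intro_carry q n : (emin E <= q < emax E)%Z -> (Z.abs n <= 2 * K)%Z ->
  is_float E M (IZR n * ulp q).
Proof.
  intros Hq Hn. pose proof K_ge_2.
  destruct (Z.eq_dec (Z.abs n) (2 * K)) as [Hc|Hc]; [|apply float_intro; lia].
  assert (n = 2 * K \/ n = 2 * - K)%Z as [-> | ->] by lia;
    rewrite grid_double; apply float_intro; lia.
Qed.

Lemma grid_lt q n n' : IZR n * ulp q < IZR n' * ulp q -> (n < n')%Z.
Proof. intros H. apply lt_IZR, (Rmult_lt_reg_r (ulp q)); [apply bpow_gt_0|exact H]. Qed.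

Lemma float_canonical x : is_float E M x -> exists m e,
  (Z.abs m < 2 * K)%Z /\ (emin E <= e <= emax E)%Z /\ x = IZR m * ulp e /\
  ((K <= Z.abs m)%Z \/ e = emin E).
Proof.
  intros (m & e & Hm & He & Hx). rewrite Zpower_succ_M in Hm.
  remember (Z.to_nat (e - emin E)) as k eqn:Hk.
  revert m e Hm He Hx Hk. induction k as [|k IH]; intros m e Hm He Hx Hk.
  - exists m, e. repeat split; auto; lia.
  - destruct (Z_le_gt_dec K (Z.abs m)) as [Hn|Hs].
    + exists m, e. repeat split; auto; lia.
    + apply (IH (2 * m)%Z (e - 1)%Z); try lia.
      rewrite Hx, grid_double. do 2 f_equal. lia.
Qed.

Lemma float_on_grid y q : is_float E M y -> (emin E <= q)%Z ->
  q = emin E \/ bpow q <= Rabs y -> exists n, y = IZR n * ulp q.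
Proof.
  intros (m & e & Hm & He & Hy) Hq Hlarge.
  assert (Hqe : (q <= e)%Z).
  { destruct Hlarge as [->|Hlarge]; [lia|].
    enough (Rabs y < bpow (e + 1)) by (assert (q < e + 1)%Z by (apply lt_bpow; lra); lia).
    rewrite Hy, Rabs_mult, (Rabs_pos_eq (ulp e)) by apply Rlt_le, bpow_gt_0.
    replace (e + 1)%Z with ((Mz + 1) + (e - Mz))%Z by lia.
    rewrite bpow_plus, <- (IZR_Zpower (Mz + 1)), <- abs_IZR by lia.
    apply Rmult_lt_compat_r; [apply bpow_gt_0|]. apply IZR_lt. exact Hm. }
  exists (m * 2 ^ (e - q))%Z. rewrite Hy, mult_IZR, IZR_Zpower, Rmult_assoc, <- bpow_plus by lia.
  do 2 f_equal. lia.
Qed.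

(* Unless q = emin, the side condition puts [n * 2^(q-M)] and [(n+1) * 2^(q-M)] outside
   (-2^q, 2^q), where every float lies on the grid of step 2^(q-M). *)
Lemma no_float_between q n y : (emin E <= q)%Z ->
  (q = emin E \/ K <= n \/ n + 1 <= - K)%Z -> is_float E M y ->
  y <= IZR n * ulp q \/ IZR (n + 1) * ulp q <= y.
Proof.
  intros Hq Hgap Hy.
  destruct (Rle_lt_dec y (IZR n * ulp q)) as [|Hlo]; [left; assumption|].
  destruct (Rle_lt_dec (IZR (n + 1) * ulp q) y) as [|Hhi]; [right; assumption|].
  exfalso. pose proof (K_ulp q) as HK. pose proof (bpow_gt_0 (q - Mz)).
  assert (Hlarge : q = emin E \/ bpow q <= Rabs y).
  { destruct Hgap as [Hmin|[Hn|Hn]]; [left; exact Hmin|right..].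
    - apply IZR_le in Hn. pose proof (Rle_abs y). nra.
    - apply IZR_le in Hn. rewrite opp_IZR in Hn. pose proof (Rle_abs (- y)).
      rewrite Rabs_Ropp in *. nra. }
  destruct (float_on_grid y q Hy Hq Hlarge) as [n' ->].
  apply grid_lt in Hlo. apply grid_lt in Hhi. lia.
Qed.

(* With the side condition of [no_float_between], the next float is [(n+1) * 2^(q-M)];
   at the negative powers of two the finer spacing of the binade below must be used. *)
Lemma float_succ_repr x : is_float E M x -> x < Omega E M -> exists q n,
  (emin E <= q <= emax E)%Z /\ x = IZR n * ulp q /\ (- (2 * K) <= n < 2 * K)%Z /\
  (q = emin E \/ K <= n \/ n + 1 <= - K)%Z /\ is_float E M (IZR (n + 1) * ulp q).
Proof.
  intros Hx HxO. pose proof K_ge_2.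
  destruct (float_canonical x Hx) as (m & e & Hm & He & -> & Hc).
  destruct (classic (m = - K /\ e <> emin E)%Z) as [[-> Hne]|Hpow].
  - exists (e - 1)%Z, (- (2 * K))%Z. split; [lia|]. split.
    { replace (- (2 * K))%Z with (2 * - K)%Z by ring. rewrite grid_double. do 2 f_equal. lia. }
    split; [lia|]. split; [lia|]. apply float_intro; lia.
  - exists e, m. split; [lia|]. split; [reflexivity|]. split; [lia|]. split; [lia|].
    destruct (Z.eq_dec (m + 1) (2 * K)) as [Hcarry|]; [|apply float_intro; lia].
    apply float_intro_carry; [|lia]. split; [lia|].
    destruct (Z.eq_dec e (emax E)) as [->|]; [|lia].
    rewrite Omega_eq in HxO. replace m with (2 * K - 1)%Z in HxO by lia. lra.
Qed.

Lemma Omega_lt_bpow : Omega E M < bpow (emax E + 1).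
Proof.
  rewrite Omega_eq. replace (emax E + 1)%Z with (1 + emax E)%Z by lia.
  rewrite bpow_plus, bpow_1, <- (K_ulp (emax E)), minus_IZR, mult_IZR.
  pose proof (bpow_gt_0 (emax E - Mz)). lra.
Qed.

Lemma even_float_grid q n : (emin E <= q <= emax E)%Z -> (q = emin E \/ K <= Z.abs n)%Z ->
  (Z.abs n <= 2 * K)%Z -> Z.even n = true -> is_float E M (IZR n * ulp q) ->
  is_even_float E M (IZR n * ulp q).
Proof.
  intros Hq Hc Hn Hev Hf. pose proof K_ge_2.
  destruct (Z.eq_dec (Z.abs n) (2 * K)) as [Hcarry|];
    [|exists n, q; rewrite Zpower_succ_M; repeat split; auto; lia].
  apply Z.even_spec in Hev as [m ->]. pose proof (grid_double q m) as Hx.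
  assert (Hqmax : (q + 1 <= emax E)%Z).
  { apply float_bound in Hf. rewrite Hx, Rabs_mult, (Rabs_pos_eq (ulp _)), <- abs_IZR in Hf
      by apply Rlt_le, bpow_gt_0.
    replace (Z.abs m) with K in Hf by lia. rewrite K_ulp in Hf.
    pose proof Omega_lt_bpow. enough (q + 1 < emax E + 1)%Z by lia. apply lt_bpow. lra. }
  rewrite Hx. exists m, (q + 1)%Z. rewrite Zpower_succ_M. repeat split; try lia.
  assert (m = K \/ m = - K)%Z as [-> | ->] by lia; [|rewrite Z.even_opp]; apply K_even.
Qed.

Lemma grid_succ_even q n : (emin E <= q <= emax E)%Z -> (- (2 * K) <= n < 2 * K)%Z ->
  (q = emin E \/ K <= n \/ n + 1 <= - K)%Z ->
  is_float E M (IZR n * ulp q) -> is_float E M (IZR (n + 1) * ulp q) ->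
  is_even_float E M (IZR n * ulp q) \/ is_even_float E M (IZR (n + 1) * ulp q).
Proof.
  intros Hq Hn Hgap Hf Hsf. destruct (Z.even n) eqn:Hev.
  - left. apply even_float_grid; auto; lia.
  - right. apply even_float_grid; auto; try lia.
    rewrite Z.even_add, Hev. reflexivity.
Qed.

Lemma fsucc_Fin x : is_float E M x -> x < Omega E M -> exists q n,
  (emin E <= q <= emax E)%Z /\ x = IZR n * ulp q /\ (- (2 * K) <= n < 2 * K)%Z /\
  (q = emin E \/ bpow q <= Rabs x) /\ is_float E M (x + ulp q) /\
  (forall y, is_float E M y -> x < y -> x + ulp q <= y) /\
  fsucc E M (Fin x) = Fin (x + ulp q).
Proof.
  intros Hx HxO.
  destruct (float_succ_repr x Hx HxO) as (q & n & Hq & -> & Hn & Hgap & Hsf).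
  pose proof (bpow_gt_0 (q - Mz)) as Hu.
  assert (Hsucc : IZR (n + 1) * ulp q = IZR n * ulp q + ulp q) by (rewrite plus_IZR; ring).
  rewrite Hsucc in Hsf.
  assert (Hnext : forall y, is_float E M y -> IZR n * ulp q < y -> IZR n * ulp q + ulp q <= y).
  { intros y Hy Hlt. rewrite <- Hsucc.
    destruct (no_float_between q n y ltac:(lia) Hgap Hy); [lra|assumption]. }
  exists q, n. split; [exact Hq|]. split; [reflexivity|]. split; [exact Hn|].
  split; [|split; [exact Hsf|split; [exact Hnext|]]].
  - pose proof (K_ulp q) as HK.
    destruct Hgap as [Hmin|[Hpos|Hneg]]; [left; exact Hmin|right..].
    + apply IZR_le in Hpos. pose proof (Rle_abs (IZR n * ulp q)). nra.
    + apply IZR_le in Hneg. rewrite plus_IZR, opp_IZR in Hneg.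
      pose proof (Rle_abs (- (IZR n * ulp q))). rewrite Rabs_Ropp in *. nra.
  - apply fsucc_eq. split; [discriminate|]. split; [exact Hsf|]. split.
    { split; [apply xle_Fin; lra|]. intros [=]. lra. }
    intros [y| | |] _ Hy [Hle Hne]; try reflexivity; try discriminate.
    apply xle_Fin, Hnext; [exact Hy|]. apply xle_Fin in Hle.
    destruct (Req_dec (IZR n * ulp q) y) as [Heq|]; [subst y; congruence|lra].
Qed.

Lemma is_rnd_fin_float y : is_float E M y -> is_rnd_fin E M y y.
Proof.
  intros Hy. split.
  - split; [exact Hy|]. intros g _. rewrite Rminus_diag, Rabs_R0. apply Rabs_pos.
  - left. intros g [_ Hg]. specialize (Hg y Hy). rewrite Rminus_diag, Rabs_R0 in Hg.
    pose proof (Rabs_pos (y - g)). apply Rabs_le_between in Hg. lra.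
Qed.

Lemma is_rnd_fin_bracket lo hi y : is_float E M lo -> is_float E M hi -> lo < y < hi ->
  (forall f, is_float E M f -> f <= lo \/ hi <= f) ->
  is_even_float E M lo \/ is_even_float E M hi -> exists r, is_rnd_fin E M y r.
Proof.
  intros Hlo Hhi Hy Hsep Hev.
  assert (Hdlo : Rabs (y - lo) = y - lo) by (apply Rabs_pos_eq; lra).
  assert (Hdhi : Rabs (y - hi) = hi - y) by (rewrite Rabs_minus_sym; apply Rabs_pos_eq; lra).
  assert (Hdist : forall g, is_float E M g ->
    (g <= lo /\ y - g <= Rabs (y - g)) \/ (hi <= g /\ g - y <= Rabs (y - g))).
  { intros g Hg. pose proof (Rle_abs (y - g)). pose proof (Rle_abs (- (y - g))).
    rewrite Rabs_Ropp in *. destruct (Hsep g Hg); [left|right]; split; auto; lra. }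
  destruct (Rtotal_order (y - lo) (hi - y)) as [Hc|[Hc|Hc]].
  - exists lo. split.
    + split; [exact Hlo|]. intros g Hg. destruct (Hdist g Hg); lra.
    + left. intros g [Hg Hgn]. specialize (Hgn lo Hlo). destruct (Hdist g Hg); lra.
  - destruct Hev; [exists lo|exists hi]; (split; [|right; assumption]);
      (split; [assumption|]); intros g Hg; destruct (Hdist g Hg); lra.
  - exists hi. split.
    + split; [exact Hhi|]. intros g Hg. destruct (Hdist g Hg); lra.
    + left. intros g [Hg Hgn]. specialize (Hgn hi Hhi). destruct (Hdist g Hg); lra.
Qed.

Lemma float_floor y : - Omega E M <= y -> exists lo,
  is_float E M lo /\ lo <= y /\ forall f, is_float E M f -> f <= y -> f <= lo.
Proof.
  intros Hy. pose proof emax_ge_3. pose proof emin_emax.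
  assert (Hgrid : forall f, is_float E M f -> exists n, f = IZR n * ulp (emin E))
    by (intros f Hf; apply float_on_grid; auto; lia).
  pose proof (bpow_gt_0 (emin E - Mz)) as Hu.
  set (S n := is_float E M (IZR n * ulp (emin E)) /\ IZR n * ulp (emin E) <= y).
  destruct (Hgrid _ (float_opp _ Omega_float)) as [n0 Hn0].
  destruct (Z_bounded_max S n0 (up (y / ulp (emin E)))) as [n [[Hf Hle] Hmax]].
  - split; rewrite <- Hn0; [apply float_opp, Omega_float|exact Hy].
  - intros m [_ Hm]. apply Z.lt_le_incl, grid_lt with (q := emin E).
    destruct (archimed (y / ulp (emin E))) as [Hup _].
    apply Rle_lt_trans with y; [exact Hm|].
    replace y with (y / ulp (emin E) * ulp (emin E)) at 1 by (field; lra).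
    apply Rmult_lt_compat_r; assumption.
  - exists (IZR n * ulp (emin E)). split; [exact Hf|]. split; [exact Hle|].
    intros f Hff Hfy. destruct (Hgrid f Hff) as [m ->].
    apply Rmult_le_compat_r; [lra|]. apply IZR_le, Hmax. split; assumption.
Qed.

(* [rnd] picks its value with [epsilon], which is junk unless such a value exists. *)
Lemma is_rnd_fin_exists y : Rabs y <= Omega E M -> exists r, is_rnd_fin E M y r.
Proof.
  intros Hy. apply Rabs_le_between in Hy.
  destruct (float_floor y ltac:(lra)) as (lo & Hlo & Hloy & Hmax).
  destruct (Req_dec lo y) as [<-|Hne]; [exists lo; apply is_rnd_fin_float, Hlo|].
  destruct (float_succ_repr lo Hlo ltac:(lra)) as (q & n & Hq & Hlo_eq & Hn & Hgap & Hhi).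
  pose proof (bpow_gt_0 (q - Mz)).
  assert (Hsucc : IZR (n + 1) * ulp q = lo + ulp q) by (rewrite Hlo_eq, plus_IZR; ring).
  apply (is_rnd_fin_bracket lo (IZR (n + 1) * ulp q)); [exact Hlo|exact Hhi| | |].
  - split; [lra|]. destruct (Rlt_le_dec y (IZR (n + 1) * ulp q)) as [|Hle]; [assumption|].
    specialize (Hmax _ Hhi Hle). lra.
  - intros f Hf. rewrite Hlo_eq. apply no_float_between; auto. lia.
  - rewrite Hlo_eq in *. apply grid_succ_even; assumption.
Qed.

Lemma rnd_between y A B : is_float E M A -> is_float E M B -> A <= y <= B ->
  exists r, rnd E M y = Fin r /\ A <= r <= B.
Proof.
  intros HA HB Hy.
  pose proof (Rabs_le_between _ _ (float_bound A HA)).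
  pose proof (Rabs_le_between _ _ (float_bound B HB)).
  assert (Hth : 0 < bpow (emax E) * eps M) by (apply Rmult_lt_0_compat; apply bpow_gt_0).
  unfold rnd. destruct (Rle_dec _ y); [lra|]. destruct (Rle_dec y _); [lra|].
  destruct (is_rnd_fin_exists y) as [r0 Hr0]; [apply Rabs_le; lra|].
  destruct (epsilon_spec (inhabits 0) (is_rnd_fin E M y) (ex_intro _ r0 Hr0))
    as [[_ Hnear] _].
  set (r := epsilon _ _) in *. exists r. split; [reflexivity|].
  specialize (Hnear A HA) as HnA. specialize (Hnear B HB) as HnB.
  rewrite (Rabs_pos_eq (y - A)) in HnA by lra.
  rewrite (Rabs_minus_sym y B), (Rabs_pos_eq (B - y)) in HnB by lra.
  pose proof (Rle_abs (y - r)). pose proof (Rle_abs (- (y - r))). rewrite Rabs_Ropp in *. lra.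
Qed.

Lemma rnd_float y : is_float E M y -> rnd E M y = Fin y.
Proof.
  intros Hy. destruct (rnd_between y y y Hy Hy ltac:(lra)) as (r & -> & Hr).
  f_equal. lra.
Qed.

Lemma xmin_ind (Q : xfloat -> Prop) a b : Q a -> Q b -> Q (xmin a b).
Proof. unfold xmin. destruct (xleb a b); auto. Qed.

Lemma xmax_ind (Q : xfloat -> Prop) a b : Q a -> Q b -> Q (xmax a b).
Proof. unfold xmax. destruct (xleb a b); auto. Qed.

Lemma itv_lift_Itv (Q : xfloat -> Prop) op a b c d :
  (forall s, Q s -> is_nan s = false) ->
  Q (op a c) -> Q (op a d) -> Q (op b c) -> Q (op b d) ->
  exists lo hi, itv_lift op (Itv a b) (Itv c d) = Itv lo hi /\ Q lo /\ Q hi.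
Proof.
  intros Hnan H1 H2 H3 H4. simpl.
  rewrite (Hnan _ H1), (Hnan _ H2), (Hnan _ H3), (Hnan _ H4).
  eexists _, _. split; [reflexivity|].
  split; [repeat apply xmin_ind|repeat apply xmax_ind]; assumption.
Qed.

Lemma gamma_sub_Itv lo hi A B : xle A lo -> xle hi B -> gamma_sub E M (Itv lo hi) A B.
Proof. intros HA HB x (_ & Hlo & Hhi). split; eapply xle_trans; eassumption. Qed.

Lemma mu_sharp_within w b x1 x2 A B :
  is_float E M (x1 * w) -> is_float E M (x2 * w) -> is_float E M A -> is_float E M B ->
  A <= x1 * w + b <= B -> A <= x2 * w + b <= B ->
  gamma_sub E M (mu_sharp E M w b (Itv (Fin x1) (Fin x2))) (Fin A) (Fin B).
Proof.
  intros Hv1 Hv2 HA HB H1 H2.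
  set (V s := s = Fin (x1 * w) \/ s = Fin (x2 * w)).
  set (W s := xle (Fin A) s /\ xle s (Fin B)).
  assert (Hmul : forall x, is_float E M (x * w) -> xmul E M (Fin x) (Fin w) = Fin (x * w))
    by (intros x Hx; apply rnd_float, Hx).
  destruct (itv_lift_Itv V (xmul E M) (Fin x1) (Fin x2) (Fin w) (Fin w))
    as (lo & hi & Hprod & Hlo & Hhi); try (unfold V; rewrite Hmul by assumption; auto).
  { intros s [-> | ->]; reflexivity. }
  assert (Hsum : forall s, V s -> W (xadd E M s (Fin b))).
  { intros s [-> | ->]; simpl;
      [destruct (rnd_between _ A B HA HB H1) as (r & -> & Hr)
      |destruct (rnd_between _ A B HA HB H2) as (r & -> & Hr)];
      split; apply xle_Fin; lra. }
  unfold mu_sharp. rewrite Hprod.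
  destruct (itv_lift_Itv W (xadd E M) lo hi (Fin b) (Fin b))
    as (lo' & hi' & -> & [HAlo _] & [_ HhiB]); auto.
  { intros [r| | |] [HAs _]; try reflexivity; discriminate HAs. }
  apply gamma_sub_Itv; assumption.
Qed.

Lemma float_zero : is_float E M 0.
Proof.
  replace 0 with (IZR 0 * ulp (emin E)) by ring. pose proof K_ge_2. pose proof emax_ge_3.
  pose proof emin_emax. apply float_intro; lia.
Qed.

Lemma float_one : is_float E M 1.
Proof.
  replace 1 with (IZR K * ulp 0) by (rewrite K_ulp; reflexivity).
  pose proof K_ge_2. pose proof emax_ge_3. pose proof emin_emax. apply float_intro; lia.
Qed.

Lemma xle_fsucc_one_le_2 z : xle (Fin z) (fsucc E M (Fin 1)) -> z <= 2.
Proof.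
  intros Hz. pose proof Omega_ge. pose proof (bpow_gt_0 (emax E)).
  destruct (fsucc_Fin 1 float_one ltac:(lra)) as (q & _ & Hq & _ & _ & Hsmall & _ & _ & Hs).
  rewrite Hs in Hz. apply xle_Fin in Hz.
  assert (Hq0 : (q <= 0)%Z).
  { rewrite Rabs_R1 in Hsmall. destruct Hsmall as [->|Hsmall]; [pose proof emin_emax;
      pose proof emax_ge_3; lia|]. enough (q < 1)%Z by lia. apply lt_bpow. rewrite bpow_1. lra. }
  assert (ulp q <= bpow 0) by (apply bpow_le; lia). simpl in *. lra.
Qed.

Lemma grid_abs_le_4 q n : (q <= 1)%Z -> (Z.abs n <= 2 * K)%Z -> Rabs (IZR n * ulp q) <= 4.
Proof.
  intros Hq Hn. rewrite Rabs_mult, (Rabs_pos_eq (ulp q)), <- abs_IZR by apply Rlt_le, bpow_gt_0.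
  apply IZR_le in Hn. rewrite mult_IZR in Hn.
  assert (ulp q <= ulp 1) by (apply bpow_le; lia).
  pose proof (K_ulp 1). rewrite bpow_1 in *. pose proof (bpow_gt_0 (q - Mz)).
  pose proof (IZR_le _ _ (Z.abs_nonneg n)). nra.
Qed.

Definition maps_into (w b : R) (I : itv) (lo hi : xfloat) : Prop :=
  itv_wf I -> gamma_sub E M (mu_sharp E M w b I) lo hi.

Definition separates (w b : R) (Ilo Ihi : itv) (eta eta' : xfloat) : Prop :=
  (maps_into w b Ilo (Fin (- Omega E M)) eta /\ maps_into w b Ihi eta' (Fin (Omega E M))) \/
  (maps_into w b Ilo eta' (Fin (Omega E M)) /\ maps_into w b Ihi (Fin (- Omega E M)) eta).

Lemma maps_into_const x1 x2 eta A B : is_float E M eta -> is_float E M A -> is_float E M B ->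
  A <= eta <= B -> maps_into 0 eta (Itv (Fin x1) (Fin x2)) (Fin A) (Fin B).
Proof.
  intros Heta HA HB Hin _. apply mu_sharp_within; rewrite ?Rmult_0_r, ?Rplus_0_l;
    first [exact float_zero | assumption].
Qed.

Lemma maps_into_increasing w b z z' eta eta' :
  is_float E M w -> is_float E M (z * w) -> is_float E M (z' * w) ->
  is_float E M eta -> is_float E M eta' -> 0 < w -> -1 <= z -> z' <= 1 ->
  Rabs w + Rabs b <= Omega E M -> z * w + b = eta -> z' * w + b = eta' ->
  maps_into w b (Itv (Fin (-1)) (Fin z)) (Fin (- Omega E M)) (Fin eta) /\
  maps_into w b (Itv (Fin z') (Fin 1)) (Fin eta') (Fin (Omega E M)).
Proof.
  intros Hw Hzw Hz'w Heta Heta' Hpos Hz Hz' Hbound Hlo Hhi.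
  assert (Hm1 : is_float E M (-1 * w))
    by (replace (-1 * w) with (- w) by ring; apply float_opp, Hw).
  assert (H1 : is_float E M (1 * w)) by (rewrite Rmult_1_l; exact Hw).
  pose proof Omega_float. pose proof (float_opp _ Omega_float).
  pose proof (Rabs_le_between _ _ (float_bound _ Heta)).
  pose proof (Rabs_le_between _ _ (float_bound _ Heta')).
  pose proof (Rle_abs w). pose proof (Rle_abs b). pose proof (Rle_abs (- b)).
  rewrite Rabs_Ropp in *.
  assert (- w <= z * w) by nra. assert (z' * w <= w) by nra.
  split; intros _; apply mu_sharp_within; (assumption || lra).
Qed.

Lemma maps_into_decreasing w b z z' eta eta' :
  is_float E M w -> is_float E M (z * w) -> is_float E M (z' * w) ->
  is_float E M eta -> is_float E M eta' -> w < 0 -> -1 <= z -> z' <= 1 ->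
  Rabs w + Rabs b <= Omega E M -> z * w + b = eta' -> z' * w + b = eta ->
  maps_into w b (Itv (Fin (-1)) (Fin z)) (Fin eta') (Fin (Omega E M)) /\
  maps_into w b (Itv (Fin z') (Fin 1)) (Fin (- Omega E M)) (Fin eta).
Proof.
  intros Hw Hzw Hz'w Heta Heta' Hneg Hz Hz' Hbound Hlo Hhi.
  assert (Hm1 : is_float E M (-1 * w))
    by (replace (-1 * w) with (- w) by ring; apply float_opp, Hw).
  assert (H1 : is_float E M (1 * w)) by (rewrite Rmult_1_l; exact Hw).
  pose proof Omega_float. pose proof (float_opp _ Omega_float).
  pose proof (Rabs_le_between _ _ (float_bound _ Heta)).
  pose proof (Rabs_le_between _ _ (float_bound _ Heta')).
  pose proof (Rle_abs (- w)). pose proof (Rle_abs b). pose proof (Rle_abs (- b)).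
  rewrite Rabs_Ropp in *.
  assert (z * w <= - w) by nra. assert (w <= z' * w) by nra.
  split; intros _; apply mu_sharp_within; (assumption || lra).
Qed.

(* Scaling by W = 2^(qe-qz) maps the grid of z onto the grid of eta, so that z and its
   successor land exactly on eta and its successor after the shift b. *)
Lemma separating_network_grid qe a qz c eta z :
  (emin E <= qe <= 1)%Z -> (- (2 * K) <= a < 2 * K)%Z ->
  (emin E <= qz <= 0)%Z -> (- (2 * K) <= c < 2 * K)%Z ->
  eta = IZR a * ulp qe -> z = IZR c * ulp qz ->
  is_float E M eta -> is_float E M (eta + ulp qe) -> -1 <= z -> z + ulp qz <= 1 ->
  exists w b, is_float E M w /\ is_float E M b /\
  separates w b (Itv (Fin (-1)) (Fin z)) (Itv (Fin (z + ulp qz)) (Fin 1))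
    (Fin eta) (Fin (eta + ulp qe)).
Proof.
  intros Hqe Ha Hqz Hc Heta_eq Hz_eq Heta Hetag Hz Hzd.
  pose proof K_ge_2. pose proof emax_ge_3. pose proof emin_emax. pose proof Omega_ge.
  set (W := bpow (qe - qz)).
  assert (HW : is_float E M W) by (unfold W; rewrite <- K_ulp; apply float_intro; lia).
  assert (HW0 : 0 < W) by apply bpow_gt_0.
  assert (HWmax : W <= bpow (emax E)) by (apply bpow_le; lia).
  assert (Hscale : forall n, IZR n * ulp qz * W = IZR n * ulp qe).
  { intros n. unfold W. rewrite Rmult_assoc, <- bpow_plus. do 2 f_equal. lia. }
  assert (HzW : z * W = IZR c * ulp qe) by (rewrite Hz_eq; apply Hscale).
  assert (HzdW : (z + ulp qz) * W = IZR (c + 1) * ulp qe)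
    by (rewrite <- Hscale, Hz_eq, plus_IZR; ring).
  assert (Hgrid : forall n, (Z.abs n <= 2 * K)%Z -> is_float E M (IZR n * ulp qe))
    by (intros n Hn; apply float_intro_carry; lia).
  assert (Hcase : (Z.abs (a - c) <= 2 * K)%Z \/ (Z.abs (a + c + 1) <= 2 * K)%Z) by lia.
  destruct Hcase as [Hb|Hb].
  - pose proof (grid_abs_le_4 _ _ (proj2 Hqe) Hb) as Hb4.
    exists W, (IZR (a - c) * ulp qe). split; [exact HW|]. split; [apply Hgrid, Hb|]. left.
    apply maps_into_increasing; try assumption.
    + rewrite HzW. apply Hgrid. lia.
    + rewrite HzdW. apply Hgrid. lia.
    + rewrite Rabs_pos_eq by lra. lra.
    + rewrite HzW, Heta_eq, minus_IZR. ring.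
    + rewrite HzdW, Heta_eq, minus_IZR, plus_IZR. ring.
  - pose proof (grid_abs_le_4 _ _ (proj2 Hqe) Hb) as Hb4.
    exists (- W), (IZR (a + c + 1) * ulp qe). split; [apply float_opp, HW|].
    split; [apply Hgrid, Hb|]. right.
    assert (Hneg : forall x, x * - W = - (x * W)) by (intros; ring).
    apply maps_into_decreasing; rewrite ?Hneg; try assumption; try lra.
    + apply float_opp, HW.
    + apply float_opp. rewrite HzW. apply Hgrid. lia.
    + apply float_opp. rewrite HzdW. apply Hgrid. lia.
    + rewrite Rabs_Ropp, Rabs_pos_eq by lra. lra.
    + rewrite HzW, Heta_eq, !plus_IZR. ring.
    + rewrite HzdW, Heta_eq, !plus_IZR. ring.
Qed.

(* Outside [-1, 1) one of the two intervals is empty and the constant network [x => eta]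
   works. *)
Lemma separating_network eta z :
  is_float E M eta -> Rabs eta < 4 -> is_float E M z -> z <= 2 ->
  exists w b, is_float E M w /\ is_float E M b /\
  separates w b (Itv (Fin (-1)) (Fin z)) (Itv (fsucc E M (Fin z)) (Fin 1))
    (Fin eta) (fsucc E M (Fin eta)).
Proof.
  intros Heta Heta4 Hz Hz2.
  pose proof emax_ge_3. pose proof emin_emax. pose proof Omega_ge.
  pose proof (bpow_gt_0 (emax E)). pose proof Omega_float. pose proof (float_opp _ Omega_float).
  pose proof (Rabs_le_between _ _ (Rlt_le _ _ Heta4)).
  destruct (fsucc_Fin eta Heta ltac:(lra))
    as (qe & a & Hqe & Heta_eq & Ha & Hqe_small & Hetag & _ & ->).
  destruct (fsucc_Fin z Hz ltac:(lra))
    as (qz & c & Hqz & Hz_eq & Hc & Hqz_small & Hzd & Hznext & ->).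
  pose proof (bpow_gt_0 (qz - Mz)).
  destruct (Rlt_le_dec z (-1)) as [Hlow|Hlow].
  { exists 0, eta. split; [exact float_zero|]. split; [exact Heta|]. right. split.
    - intros Hwf. apply xle_Fin in Hwf. lra.
    - apply maps_into_const; auto. lra. }
  destruct (Rlt_le_dec z 1) as [Hhigh|Hhigh].
  2: { exists 0, eta. split; [exact float_zero|]. split; [exact Heta|]. left. split.
       - apply maps_into_const; auto. lra.
       - intros Hwf. apply xle_Fin in Hwf. lra. }
  apply (separating_network_grid qe a qz c); try assumption.
  - split; [lia|]. destruct Hqe_small as [->|Hsmall]; [lia|].
    enough (qe < 2)%Z by lia. apply lt_bpow. simpl. lra.
  - split; [lia|]. destruct Hqz_small as [->|Hsmall]; [lia|].
    enough (qz < 1)%Z by lia. apply lt_bpow. rewrite bpow_1.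
    apply Rle_lt_trans with (Rabs z); [exact Hsmall|]. apply Rabs_def1; lra.
  - apply Hznext; [exact float_one|exact Hhigh].
Qed.

End Format.

Theorem lemma6 (E M : nat) (sigma : xfloat -> xfloat) (c1 c2 eta z : R) :
  (5 <= E)%nat -> (3 <= M)%nat -> (Z.of_nat M <= 2 ^ (Z.of_nat E - 1))%Z ->
  (forall x, in_Fbar E M x -> in_Fbar E M (sigma x)) ->
  is_float E M c1 -> is_float E M c2 -> is_float E M eta ->
  condition1 E M sigma c1 c2 eta ->
  is_float E M z -> xle (Fin (Rabs z)) (fsucc E M (Fin 1)) ->
  exists w b, is_float E M w /\ is_float E M b /\
    let Ilo := Itv (Fin (-1)) (Fin z) in
    let Ihi := Itv (fsucc E M (Fin z)) (Fin 1) in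
    let below := (Fin (- Omega E M), Fin eta) in
    let above := (fsucc E M (Fin eta), Fin (Omega E M)) in
    ((itv_wf Ilo -> gamma_sub E M (mu_sharp E M w b Ilo) (fst below) (snd below)) /\
     (itv_wf Ihi -> gamma_sub E M (mu_sharp E M w b Ihi) (fst above) (snd above)))
    \/
    ((itv_wf Ilo -> gamma_sub E M (mu_sharp E M w b Ilo) (fst above) (snd above)) /\
     (itv_wf Ihi -> gamma_sub E M (mu_sharp E M w b Ihi) (fst below) (snd below))).
Proof.
  intros HE HM _ _ _ _ Heta HC Hz Hzle. cbv zeta. cbn [fst snd].
  assert (Heta4 : Rabs eta < 4).
  { destruct HC as [_ [[[_ Heta_le] _] _]]. pose proof (bpow_gt_0 (- Z.of_nat M - 1)).
    unfold eps in Heta_le. lra. }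
  apply (separating_network E M); try lia; try assumption.
  apply Rle_trans with (Rabs z); [apply Rle_abs|].
  apply (xle_fsucc_one_le_2 E M); [lia..|exact Hzle].
Qed.
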